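(* Let $\mathcal{R}$ be the hyperfinite $II_1$ factor with normalized trace $\tau$, realized as the weak closure of the increasing union $\bigcup_{j\ge0} M_{2^j}(\mathbb{C})$; let $P_n$ be the orthogonal projection of $L^2(\mathcal{R},\tau)$ onto $M_{2^n}(\mathbb{C})$ and $Q_n=I-P_n$. Let $(\mathcal{E},D(\mathcal{E}))$ be a Dirichlet form on $L^2(\mathcal{R},\tau)$ with $D(\mathcal{E})\supseteq \bigcup_{j\ge0}M_{2^j}(\mathbb{C})$, and set $\mathcal{E}_n(a)=\mathcal{E}(P_na)$. Then the following are equivalent: (1) $\lim_{n\to\infty}\mathcal{E}_n(a)=\mathcal{E}(a)$ for all $a\in D(\mathcal{E})$; (2) $\lim_{n\to\infty}\mathcal{E}(Q_na)=0$ for all $a\in D(\mathcal{E})$.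
   Context: $M_{2^n}(\mathbb{C})$ is embedded in $M_{2^{n+1}}(\mathbb{C})$ via $a\mapsto \mathrm{diag}(a,a)$. $L^2(\mathcal{R},\tau)$ is the completion of $\mathcal{R}$ in $\|a\|_2=\tau(a^*a)^{1/2}$; $J$ is the antilinear isometry extending $a\mapsto a^*$; $L^2_+$ is the closure of the positive elements of $\mathcal{R}$; for real ($J$-invariant) $a$, $a\wedge1$ is the Hilbert projection of $a$ onto the $L^2$-closure of $\{b\in L^2_+: b\le 1\}$. A Dirichlet form is a closed, densely defined, nonnegative quadratic form on $L^2(\mathcal{R},\tau)$ that is real ($D(\mathcal{E})$ is $J$-invariant and $\mathcal{E}(Ja)=\mathcal{E}(a)$) and satisfies $\mathcal{E}(a\wedge1)\le\mathcal{E}(a)$ for real $a\in D(\mathcal{E})$. *)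

From HB Require Import structures.
From mathcomp Require Import all_boot all_order all_algebra.
From mathcomp Require Import reals complex.
From mathcomp Require Import all_classical topology normedtype.
Set Implicit Arguments. Unset Strict Implicit. Unset Printing Implicit Defensive.
Import Order.TTheory GRing.Theory Num.Theory.
Local Open Scope ring_scope.

Lemma dup_size (n : nat) : (2 ^ n + 2 ^ n = 2 ^ n.+1)%N.
Proof. by rewrite expnS mul2n addnn. Qed.

Section Tower.
Variable R : realType.
Local Notation C := R[i].

Definition mx_adj (m : nat) (a : 'M[C]_m) : 'M[C]_m := (map_mx Num.conj a)^T.

Definition ntr (n : nat) (a : 'M[C]_(2 ^ n)) : C := \tr a / (2 ^ n)%:R.

Definition dup (n : nat) (a : 'M[C]_(2 ^ n)) : 'M[C]_(2 ^ n.+1) :=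
  castmx (dup_size n, dup_size n) (block_mx a 0 0 a).

Definition pos_mx (m : nat) (a : 'M[C]_m) : Prop :=
  exists b : 'M[C]_m, a = mx_adj b *m b.
End Tower.

(* A model of L^2(R, tau): a complex Hilbert space together with an     *)
(* isometric (w.r.t. <a,b> = tau(a^* b)) compatible embedding of every *)
(* M_{2^n}(C), whose union is dense.  Such a space is the completion of *)
(* the union in ||a||_2 = tau(a^*a)^{1/2}, and is unique up to a        *)
(* unitary intertwining the embeddings.  J is the antilinear isometry   *)
(* extending a |-> a^* (uniquely determined by the axioms below).       *)
(* The inner product is conjugate-linear in the first variable.        *)

Record hyperfinite_L2 (R : realType) := HyperfiniteL2 {
  L2 : lmodType R[i];
  ip : L2 -> L2 -> R[i];
  ip_linear : forall (x y z : L2) (l : R[i]),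
      ip x (l *: y + z) = l * ip x y + ip x z;
  ip_herm : forall x y : L2, ip y x = (ip x y)^*;
  ip_pos : forall x : L2, x != 0 -> 0 < ip x x;
  ip_complete : forall u : nat -> L2,
      (forall e : R, 0 < e -> exists N, forall m n, (N <= m)%N -> (N <= n)%N ->
          complex.Re (ip (u m - u n) (u m - u n)) < e) ->
      exists l : L2, forall e : R, 0 < e -> exists N, forall n, (N <= n)%N ->
          complex.Re (ip (u n - l) (u n - l)) < e;
  emb : forall n : nat, 'M[R[i]]_(2 ^ n) -> L2;
  emb_linear : forall n (l : R[i]) (a b : 'M[R[i]]_(2 ^ n)),
      emb (l *: a + b) = l *: emb a + emb b;
  emb_dup : forall n (a : 'M[R[i]]_(2 ^ n)), emb (dup a) = emb a;
  emb_ip : forall n (a b : 'M[R[i]]_(2 ^ n)),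
      ip (emb a) (emb b) = ntr (mx_adj a *m b);
  emb_dense : forall (h : L2) (e : R), 0 < e ->
      exists n (a : 'M[R[i]]_(2 ^ n)),
        complex.Re (ip (h - emb a) (h - emb a)) < e;
  J : L2 -> L2;
  J_antilinear : forall (x y : L2) (l : R[i]), J (l *: x + y) = l^* *: J x + J y;
  J_isometry : forall x : L2, ip (J x) (J x) = ip x x;
  J_emb : forall n (a : 'M[R[i]]_(2 ^ n)), J (emb a) = emb (mx_adj a)
}.

Section Forms.
Variables (R : realType) (M : hyperfinite_L2 R).
Local Notation H := (L2 M).
Local Notation C := R[i].

Definition nsq (x : H) : R := complex.Re (ip x x).

Definition l2closure (S : H -> Prop) : H -> Prop :=
  fun h => forall e : R, 0 < e -> exists s, S s /\ nsq (h - s) < e.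

Definition level (n : nat) : H -> Prop :=
  fun h => exists a : 'M[C]_(2 ^ n), h = emb M a.

Definition is_orth_proj (n : nat) (P : H -> H) : Prop :=
  forall h : H, level n (P h) /\
    forall a : 'M[C]_(2 ^ n), ip (emb M a) (h - P h) = 0.

Definition L2plus : H -> Prop :=
  l2closure (fun h => exists n (a : 'M[C]_(2 ^ n)), pos_mx a /\ h = emb M a).

(* the L^2-closure of {b in L^2_+ : b <= 1}, i.e. of the positive contractions
   (by Kaplansky density it is the closure of the positive
   contractions of the union of the matrix algebras) *)
Definition unit_interval : H -> Prop :=
  l2closure (fun h => exists n (a : 'M[C]_(2 ^ n)),
                 pos_mx a /\ pos_mx (1%:M - a) /\ h = emb M a).

(* c = a /\ 1 : Hilbert projection of a onto unit_interval *)
Definition is_wedge1 (a c : H) : Prop :=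
  unit_interval c /\ forall b, unit_interval b -> nsq (a - c) <= nsq (a - b).

Definition real_elt (a : H) : Prop := @J _ M a = a.

Definition is_quadratic_form (D : H -> Prop) (E : H -> R) : Prop :=
  [/\ D 0,
      (forall (l : C) x y, D x -> D y -> D (l *: x + y)) &
      exists B : H -> H -> C,
        [/\ forall (l : C) x y z, D x -> D y -> D z ->
              B x (l *: y + z) = l * B x y + B x z,
            forall x y, D x -> D y -> B y x = (B x y)^* &
            forall x, D x -> (E x)%:C%C = B x x]].

Definition nonneg_form (D : H -> Prop) (E : H -> R) : Prop :=
  forall x, D x -> 0 <= E x.

Definition densely_defined (D : H -> Prop) : Prop :=
  forall (h : H) (e : R), 0 < e -> exists x, D x /\ nsq (h - x) < e.

Definition closed_form (D : H -> Prop) (E : H -> R) : Prop :=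
  forall u : nat -> H, (forall n, D (u n)) ->
    (forall e : R, 0 < e -> exists N, forall m n, (N <= m)%N -> (N <= n)%N ->
        E (u m - u n) + nsq (u m - u n) < e) ->
    exists a, D a /\ forall e : R, 0 < e -> exists N, forall n, (N <= n)%N ->
        E (u n - a) + nsq (u n - a) < e.

Definition real_form (D : H -> Prop) (E : H -> R) : Prop :=
  forall a, D a -> D (@J _ M a) /\ E (@J _ M a) = E a.

Definition markovian (D : H -> Prop) (E : H -> R) : Prop :=
  forall a c, D a -> real_elt a -> is_wedge1 a c -> D c /\ E c <= E a.

Definition dirichlet_form (D : H -> Prop) (E : H -> R) : Prop :=
  [/\ is_quadratic_form D E, nonneg_form D E, densely_defined D,
      closed_form D E & real_form D E /\ markovian D E].
End Forms.

From mathcomp Require Import all_boot all_order all_algebra.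
From mathcomp Require Import reals complex.
From mathcomp Require Import all_classical topology normedtype.
From mathcomp Require Import ring lra.
Import Order.TTheory GRing.Theory Num.Theory.
Import numFieldNormedType.Exports.
Local Open Scope ring_scope.
Local Open Scope classical_set_scope.

(* Both (E, D) and the L^2 inner product are handled through the real parts of
   their sesquilinear forms, which are symmetric nonnegative R-bilinear forms.
   (2) => (1) is the continuity of E for its own seminorm.  For (1) => (2), the
   parallelogram law gives E(a - P_n a) = 2 E(a) + 2 E(P_n a) - E(a + P_n a);
   since a + P_n a -> 2a in L^2 and a closed form is lower semicontinuous,
   liminf E(a + P_n a) >= E(2a) = 4 E(a), so limsup E(a - P_n a) <= 0.
   Lower semicontinuity is derived from closedness by convexity: for y and
   L >= E(y_k) with y_k -> y, take near-minimizers of E over the shrinking convex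
   sets {z : E(z) <= L, ||z - y||^2 <= 1/(k+1)}; the parallelogram law makes them
   Cauchy for E + ||.||^2, and their limit is y. *)

Set Implicit Arguments.
Unset Strict Implicit.

Section PsdForm.
Variables (R : realType) (V : lmodType R[i]).

Record psd_form (D : V -> Prop) (b : V -> V -> R) : Prop := PsdForm {
  form_dom0 : D 0;
  form_domP : forall (l : R[i]) x y, D x -> D y -> D (l *: x + y);
  formDr : forall x y z, D x -> D y -> D z -> b x (y + z) = b x y + b x z;
  formZr : forall (t : R) x y, D x -> D y -> b x (t%:C%C *: y) = t * b x y;
  formC : forall x y, D x -> D y -> b x y = b y x;
  form_ge0 : forall x, D x -> 0 <= b x x }.

Definition quad (b : V -> V -> R) (x : V) : R := b x x.

Definition midpoint (x y : V) : V := (2^-1 : R)%:C%C *: (x + y).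

Lemma midpointB x1 x2 y1 y2 :
  midpoint x1 x2 - midpoint y1 y2 = midpoint (x1 - y1) (x2 - y2).
Proof. by rewrite /midpoint -scalerBr opprD addrACA. Qed.

Lemma midpoint_id y : midpoint y y = y.
Proof.
rewrite /midpoint -[y + y]mulr2n -[y *+ 2]scaler_nat scalerA.
by rewrite -(rmorph_nat (real_complex R)) -rmorphM /= mulVf ?pnatr_eq0 // scale1r.
Qed.

Variables (D : V -> Prop) (b : V -> V -> R).
Hypothesis bF : psd_form D b.

Lemma domD x y : D x -> D y -> D (x + y).
Proof. by move=> Dx Dy; have := form_domP bF 1 Dx Dy; rewrite scale1r. Qed.

Lemma domZ l x : D x -> D (l *: x).
Proof. by move=> Dx; have := form_domP bF l Dx (form_dom0 bF); rewrite addr0. Qed.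

Lemma domN x : D x -> D (- x).
Proof. by move=> Dx; rewrite -scaleN1r; apply: domZ. Qed.

Lemma domB x y : D x -> D y -> D (x - y).
Proof. by move=> Dx Dy; apply: domD => //; apply: domN. Qed.

Lemma formDl x y z : D x -> D y -> D z -> b (x + y) z = b x z + b y z.
Proof.
move=> Dx Dy Dz; rewrite (formC bF (domD Dx Dy) Dz) (formDr bF) //.
by rewrite (formC bF Dz Dx) (formC bF Dz Dy).
Qed.

Lemma formNr x y : D x -> D y -> b x (- y) = - b x y.
Proof.
move=> Dx Dy; have := formZr bF (-1) Dx Dy.
by rewrite raddfN /= scaleN1r mulN1r.
Qed.

Lemma formZl (t : R) x y : D x -> D y -> b (t%:C%C *: x) y = t * b x y.
Proof.
by move=> Dx Dy; rewrite (formC bF (domZ _ Dx) Dy) (formZr bF) // (formC bF Dy Dx).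
Qed.

Lemma quad_ge0 x : D x -> 0 <= quad b x.
Proof. exact: form_ge0. Qed.

Lemma quadD x y : D x -> D y -> quad b (x + y) = quad b x + quad b y + 2 * b x y.
Proof.
move=> Dx Dy; rewrite /quad (formDl Dx Dy (domD Dx Dy)) !(formDr bF) //.
by rewrite (formC bF Dy Dx); lra.
Qed.

Lemma quadN x : D x -> quad b (- x) = quad b x.
Proof.
move=> Dx; rewrite /quad (formNr (domN Dx) Dx) (formC bF (domN Dx) Dx).
by rewrite formNr // opprK.
Qed.

Lemma quadB x y : D x -> D y -> quad b (x - y) = quad b x + quad b y - 2 * b x y.
Proof. by move=> Dx Dy; rewrite (quadD Dx (domN Dy)) (quadN Dy) (formNr Dx Dy); lra. Qed.

Lemma quadZ (t : R) x : D x -> quad b (t%:C%C *: x) = t ^+ 2 * quad b x.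
Proof. by move=> Dx; rewrite /quad (formZl _ Dx (domZ _ Dx)) (formZr bF) // mulrA -expr2. Qed.

Lemma quadBC x y : D x -> D y -> quad b (x - y) = quad b (y - x).
Proof. by move=> Dx Dy; rewrite -(quadN (domB Dx Dy)) opprB. Qed.

Lemma parallelogram x y : D x -> D y ->
  quad b (x + y) + quad b (x - y) = 2 * quad b x + 2 * quad b y.
Proof. by move=> Dx Dy; rewrite quadD // quadB //; lra. Qed.

Lemma quadB_le x y : D x -> D y -> quad b (x - y) <= 2 * quad b x + 2 * quad b y.
Proof.
by move=> Dx Dy; rewrite -parallelogram // lerDr quad_ge0 //; apply: domD.
Qed.

(* The AM-GM form of the Cauchy-Schwarz inequality: expand [quad b (t x - y) >= 0]. *)
Lemma form_le_quad (t : R) x y : D x -> D y -> 0 < t ->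
  2 * b x y <= t * quad b x + quad b y / t.
Proof.
move=> Dx Dy t0; have := quad_ge0 (domB (domZ t%:C%C Dx) Dy).
rewrite (quadB (domZ _ Dx) Dy) (quadZ _ Dx) (formZl _ Dx Dy) => h.
rewrite -(ler_pM2l t0) mulrDr [t * (_ / t)]mulrC divfK ?gt_eqF //.
rewrite expr2 in h; lra.
Qed.

Lemma normr_form_le_quad (t : R) x y : D x -> D y -> 0 < t ->
  2 * `|b x y| <= t * quad b x + quad b y / t.
Proof.
move=> Dx Dy t0; have := form_le_quad Dx (domN Dy) t0.
rewrite (formNr Dx Dy) (quadN Dy) => hN; have := form_le_quad Dx Dy t0.
by case: (ger0P (b x y)) => _; lra.
Qed.

Lemma quad_continuous x (eps : R) : D x -> 0 < eps -> exists2 del, 0 < del &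
  forall w, D w -> quad b w < del -> `|quad b (x + w) - quad b x| < eps.
Proof.
move=> Dx e0; have qx := quad_ge0 Dx.
pose t := eps / (2 * (quad b x + 1)).
have t0 : 0 < t by rewrite divr_gt0 // mulr_gt0 //; lra.
have tV0 : 0 < t^-1 by rewrite invr_gt0.
have tqx : t * quad b x < eps / 2.
  rewrite /t mulrAC ltr_pdivrMr; last lra.
  have -> : eps / 2 * (2 * (quad b x + 1)) = eps * quad b x + eps by field.
  by rewrite ltrDl.
exists (eps / 2 / (1 + t^-1)); first by apply: divr_gt0; lra.
move=> w Dw; rewrite ltr_pdivlMr; last lra.
move=> qw; have qw0 := quad_ge0 Dw; have := normr_form_le_quad Dx Dw t0.
have -> : quad b (x + w) - quad b x = quad b w + 2 * b x w by rewrite quadD //; ring.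
move=> bxw; apply: le_lt_trans (ler_normD _ _) _.
rewrite ger0_norm // normrM ger0_norm //; lra.
Qed.

Lemma quad_cvg a (x : nat -> V) : D a -> (forall n, D (x n)) ->
  quad b (a - x n) @[n --> \oo] --> 0 -> quad b (x n) @[n --> \oo] --> quad b a.
Proof.
move=> Da Dx /cvgr0_norm_lt ax; apply/cvgrPdist_lt => eps e0.
have [del del0 a_cont] := quad_continuous Da e0.
move: (ax _ del0); apply: filterS => n /=; have Dxa := domB (Dx n) Da.
rewrite (quadBC Da (Dx n)) ger0_norm => [small|]; last exact: (quad_ge0 Dxa).
by have := a_cont _ Dxa small; rewrite [a + _]addrC subrK distrC.
Qed.

Lemma quad_midpoint x y : D x -> D y -> quad b (midpoint x y) = quad b (x + y) / 4.
Proof.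
move=> Dx Dy; rewrite /midpoint (quadZ _ (domD Dx Dy)).
by rewrite expr2 mulrC; congr (_ * _); field.
Qed.

Lemma quad_midpoint_le x y : D x -> D y ->
  quad b (midpoint x y) <= (quad b x + quad b y) / 2.
Proof.
move=> Dx Dy; rewrite quad_midpoint //.
have := parallelogram Dx Dy; have := quad_ge0 (domB Dx Dy); lra.
Qed.

End PsdForm.

Lemma Re_psd_form (R : realType) (V : lmodType R[i]) (D : V -> Prop)
    (B : V -> V -> R[i]) :
  D 0 -> (forall (l : R[i]) x y, D x -> D y -> D (l *: x + y)) ->
  (forall (l : R[i]) x y z, D x -> D y -> D z -> B x (l *: y + z) = l * B x y + B x z) ->
  (forall x y, D x -> D y -> B y x = (B x y)^*) ->
  (forall x, D x -> x != 0 -> 0 <= complex.Re (B x x)) ->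
  psd_form D (fun x y => complex.Re (B x y)).
Proof.
move=> D0 Dlin Blin Bherm Bpos.
have B0 x : D x -> B x 0 = 0.
  move=> Dx; have := Blin 1 x 0 0 Dx D0 D0; rewrite scale1r mul1r addr0.
  by rewrite -{1}[B x 0]addr0 => /addrI <-.
split=> //.
- move=> x y z Dx Dy Dz; have := Blin 1 x y z Dx Dy Dz; rewrite scale1r mul1r => ->.
  by case: (B x y); case: (B x z).
- move=> t x y Dx Dy; rewrite -[_ *: y]addr0 Blin // B0 // addr0.
  by case: (B x y) => u v /=; rewrite !mul0r subr0.
- by move=> x y Dx Dy; rewrite (Bherm x y Dx Dy); case: (B x y).
move=> x Dx; have [-> | x0] := eqVneq x 0; last exact: (Bpos x Dx x0).
by rewrite B0.
Qed.

(* [closed_form D E] of the definitions is [form_closed D E nsq]. *)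
Definition form_closed (R : realType) (V : lmodType R[i]) (D : V -> Prop)
    (e h : V -> R) : Prop :=
  forall u : nat -> V, (forall n, D (u n)) ->
    (forall eps : R, 0 < eps -> exists N, forall m n, (N <= m)%N -> (N <= n)%N ->
        e (u m - u n) + h (u m - u n) < eps) ->
    exists a, D a /\ forall eps : R, 0 < eps -> exists N, forall n, (N <= n)%N ->
        e (u n - a) + h (u n - a) < eps.

Definition inv_succ (R : realType) (k : nat) : R := k.+1%:R^-1.

Lemma inv_succ_gt0 (R : realType) k : 0 < inv_succ R k.
Proof. by rewrite invr_gt0 ltr0n. Qed.

Lemma inv_succ_le (R : realType) (k l : nat) :
  (k <= l)%N -> inv_succ R l <= inv_succ R k.
Proof. by move=> kl; rewrite lef_pV2 ?posrE ?ltr0n // ler_nat ltnS. Qed.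

Lemma inv_succ_small (R : realType) (eps : R) : 0 < eps -> exists N, inv_succ R N < eps.
Proof. by move=> e0; have [N] := ltr_add_invr e0; rewrite add0r; exists N. Qed.

Section ClosedForm.
Variables (R : realType) (V : lmodType R[i]) (D : V -> Prop) (b p : V -> V -> R).
Hypotheses (bF : psd_form D b) (pF : psd_form setT p).
Hypothesis p_definite : forall x, quad p x <= 0 -> x = 0.
Hypothesis b_closed : form_closed D (quad b) (quad p).

Section Minimizers.
Variables (y : V) (L : R).

Definition approximant (k : nat) (z : V) : Prop :=
  [/\ D z, quad b z <= L & quad p (z - y) <= inv_succ R k].

Hypothesis approximant_exists : forall k, exists z, approximant k z.

Lemma approximant_le k l z : (k <= l)%N -> approximant l z -> approximant k z.
Proof.
by move=> kl [Dz bz pz]; split=> //; apply: le_trans pz (inv_succ_le _ kl).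
Qed.

Lemma approximant_midpoint k z1 z2 : approximant k z1 -> approximant k z2 ->
  approximant k (midpoint z1 z2).
Proof.
move=> [D1 b1 p1] [D2 b2 p2]; split.
- exact: (domZ bF _ (domD bF D1 D2)).
- by have := quad_midpoint_le bF D1 D2; lra.
rewrite -(midpoint_id y) midpointB.
by have := quad_midpoint_le pF (x := z1 - y) (y := z2 - y) I I; lra.
Qed.

Definition approx_inf (k : nat) : R := inf [set quad b z | z in approximant k].

Lemma approx_inf_has_inf k : has_inf [set quad b z | z in approximant k].
Proof.
split; first by have [z zk] := approximant_exists k; exists (quad b z), z.
by exists 0 => _ [z [Dz _ _] <-]; have := quad_ge0 bF Dz.
Qed.

Lemma approx_inf_le k z : approximant k z -> approx_inf k <= quad b z.
Proof. by move=> zk; apply: ge_inf; [case: (approx_inf_has_inf k) | exists z]. Qed.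

Lemma approx_inf_nondecreasing k l : (k <= l)%N -> approx_inf k <= approx_inf l.
Proof.
move=> kl; apply: lb_le_inf; first by case: (approx_inf_has_inf l).
by move=> _ [z zl <-]; apply: approx_inf_le; exact: approximant_le kl zl.
Qed.

Lemma approx_inf_cauchy (eps : R) : 0 < eps ->
  exists N, forall k l, (N <= k)%N -> (k <= l)%N -> approx_inf l - approx_inf k < eps.
Proof.
move=> e0; have sup_inf : has_sup (range approx_inf).
  split; first by exists (approx_inf 0), 0%N.
  exists L => _ [k _ <-]; have [z zk] := approximant_exists k.
  by apply: le_trans (approx_inf_le zk) _; case: zk.
have [_ [N _ <-] ltN] := sup_adherent e0 sup_inf.
exists N => k l Nk kl; have := approx_inf_nondecreasing Nk.
have : approx_inf l <= sup (range approx_inf) by apply: sup_upper_bound => //; exists l.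
lra.
Qed.

Section MinimizingSequence.
Variable z : nat -> V.
Hypothesis z_approx : forall k, approximant k (z k).
Hypothesis z_min : forall k, quad b (z k) < approx_inf k + inv_succ R k.

(* [midpoint (z k) (z l)] is a [k]-approximant, hence no better than [approx_inf k]. *)
Lemma minimizing_gap k l : (k <= l)%N ->
  quad b (z k - z l) + quad p (z k - z l)
    <= 2 * (approx_inf l - approx_inf k) + 8 * inv_succ R k.
Proof.
move=> kl; have [Dk _ pk] := z_approx k; have [Dl _ pl] := z_approx l.
have := approx_inf_le (approximant_midpoint (z_approx k) (approximant_le kl (z_approx l))).
rewrite (quad_midpoint bF Dk Dl) => mid.
have := parallelogram bF Dk Dl.
have := quadB_le pF (x := z k - y) (y := z l - y) I I.
rewrite opprB addrA subrK => pkl.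
have := z_min k; have := z_min l; have := inv_succ_le R kl.
lra.
Qed.

Lemma minimizing_cauchy (eps : R) : 0 < eps ->
  exists N, forall m n, (N <= m)%N -> (N <= n)%N ->
    quad b (z m - z n) + quad p (z m - z n) < eps.
Proof.
move=> e0; have e4 : 0 < eps / 4 by lra.
have e16 : 0 < eps / 16 by lra.
have [N1 N1inf] := approx_inf_cauchy e4; have [N2 N2small] := inv_succ_small e16.
exists (maxn N1 N2) => m n; rewrite !geq_max => /andP[N1m N2m] /andP[N1n N2n].
wlog mn : m n N1m N2m N1n N2n / (m <= n)%N.
  move=> gap; case/orP: (leq_total m n) => [|nm]; first exact: gap.
  have [Dm _ _] := z_approx m; have [Dn _ _] := z_approx n.
  rewrite (quadBC bF Dm Dn) (quadBC pF (x := z m) (y := z n) I I).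
  exact: gap.
have := minimizing_gap mn; have := N1inf m n N1m mn; have := inv_succ_le R N2m.
lra.
Qed.

Lemma minimizing_limit : D y /\ quad b y <= L.
Proof.
have Dz k : D (z k) by case: (z_approx k).
have [a [Da za]] := b_closed Dz minimizing_cauchy.
have ay : a = y.
  apply/eqP; rewrite -subr_eq0; apply/eqP/p_definite/ler_addgt0Pr => eps e0.
  rewrite add0r.
  have e4 : 0 < eps / 4 by lra.
  have [N1 N1a] := za _ e4; have [N2 N2small] := inv_succ_small e4.
  pose k := maxn N1 N2; have [_ _ zk] := z_approx k.
  have := N1a k (leq_maxl _ _); have := quad_ge0 bF (domB bF (Dz k) Da).
  have := inv_succ_le R (leq_maxr N1 N2 : (N2 <= k)%N).
  have := quadB_le pF (x := z k - y) (y := z k - a) I I.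
  rewrite opprB addrC addrA subrK; lra.
subst a; split=> //; apply/ler_addgt0Pr => eps e0.
have [del del0 qy_cont] := quad_continuous bF Da e0.
have [N zN] := za _ del0; have [_ zL _] := z_approx N.
have qw : quad b (z N - y) < del.
  by have := quad_ge0 pF (x := z N - y) I; have := zN N (leqnn N); lra.
have := qy_cont _ (domB bF (Dz N) Da) qw.
by rewrite [y + _]addrC subrK ltr_norml => /andP[+ _]; lra.
Qed.
End MinimizingSequence.
End Minimizers.

Lemma closed_form_bounded_lsc (y : V) (L : R) (yk : nat -> V) :
  (forall k, D (yk k)) -> (forall k, quad b (yk k) <= L) ->
  quad p (yk k - y) @[k --> \oo] --> 0 -> D y /\ quad b y <= L.
Proof.
move=> Dyk Lyk /cvgr0_norm_lt yk_cvg.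
have approximant_exists k : exists z, approximant y L k z.
  have [N _ ykN] := yk_cvg _ (inv_succ_gt0 R k).
  exists (yk N); split=> //; apply/ltW; apply: le_lt_trans (ykN N (leqnn N)).
  exact: ler_norm.
have /choice [z zP] k :
    exists z, approximant y L k z /\ quad b z < approx_inf y L k + inv_succ R k.
  have [_ [z zk <-]] := inf_adherent (inv_succ_gt0 R k) (approx_inf_has_inf approximant_exists k).
  by exists z.
exact: (minimizing_limit approximant_exists (fun k => (zP k).1) (fun k => (zP k).2)).
Qed.

Lemma closed_form_lsc (y : V) (yk : nat -> V) (eps : R) :
  (forall k, D (yk k)) -> quad p (yk k - y) @[k --> \oo] --> 0 -> 0 < eps ->
  \forall k \near \oo, quad b y - eps < quad b (yk k).
Proof.
move=> Dyk yk_cvg e0; apply: contrapT => not_near.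
have /choice [m mP] N : exists k, (N <= k)%N /\ quad b (yk k) <= quad b y - eps.
  apply: contrapT => noK; apply: not_near; exists N => // k Nk /=.
  by rewrite ltNge; apply/negP => ykk; apply: noK; exists k.
have m_cvg : m @ \oo --> \oo.
  by apply/cvgnyPge => A; exists A => // k Ak; apply: leq_trans Ak (mP k).1.
have [_] := closed_form_bounded_lsc (fun k => Dyk (m k)) (fun k => (mP k).2)
  (cvg_comp _ _ m_cvg yk_cvg).
lra.
Qed.

(* By the parallelogram law it suffices to bound [quad b (a + x n)] from below,
   which lower semicontinuity at [a + a] does. *)
Lemma closed_form_quad_cvg (a : V) (x : nat -> V) : D a -> (forall n, D (x n)) ->
  quad p (a - x n) @[n --> \oo] --> 0 -> quad b (x n) @[n --> \oo] --> quad b a ->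
  quad b (a - x n) @[n --> \oo] --> 0.
Proof.
move=> Da Dx px bx; apply/cvgr0Pnorm_lt => eps e0.
have e2 : 0 < eps / 2 by lra.
have e4 : 0 < eps / 4 by lra.
have ax_cvg : quad p (a + x n - (a + a)) @[n --> \oo] --> 0.
  have -> : (fun n => quad p (a + x n - (a + a))) = (fun n => quad p (a - x n)).
    apply/funext => n; rewrite opprD addrACA subrr add0r.
    exact: (quadBC pF (x := x n) (y := a) I I).
  exact: px.
have lsc := closed_form_lsc (fun n => domD bF Da (Dx n)) ax_cvg e2.
have /cvgrPdist_lt/(_ _ e4) bx_near := bx.
apply: filterS2 lsc bx_near => n lsc_n /=; rewrite ltr_distlC => /andP[_ bxn].
have qaa : quad b (a + a) = 4 * quad b a by rewrite (quadD bF Da Da) /quad; lra.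
rewrite ger0_norm; last exact: (quad_ge0 bF (domB bF Da (Dx n))).
by have := parallelogram bF Da (Dx n); lra.
Qed.

End ClosedForm.

Section HyperfiniteL2.
Variables (R : realType) (M : hyperfinite_L2 R).
Local Notation H := (L2 M).

Definition re_ip (x y : H) : R := complex.Re (ip x y).

Lemma re_ip_psd : psd_form setT re_ip.
Proof.
apply: Re_psd_form => // [l x y z _ _ _|x y _ _|x _ x0]; first exact: ip_linear.
  exact: ip_herm.
by apply/ltW; have := ip_pos x0; rewrite ltcE => /andP[].
Qed.

Lemma nsqE x : nsq x = quad re_ip x.
Proof. by []. Qed.

Lemma re_ip_definite x : quad re_ip x <= 0 -> x = 0.
Proof.
apply: contraTeq => x0; rewrite -ltNge.
by have := ip_pos x0; rewrite ltcE => /andP[].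
Qed.

Lemma embB n (a c : 'M[R[i]]_(2 ^ n)) : emb M (a - c) = emb M a - emb M c.
Proof. by have := emb_linear M (-1) c a; rewrite !scaleN1r addrC => ->; rewrite addrC. Qed.

Lemma level_le k n (h : H) : (k <= n)%N -> level k h -> level n h.
Proof.
elim: n => [|n IHn]; first by rewrite leqn0 => /eqP ->.
rewrite leq_eqVlt => /orP[/eqP -> //|]; rewrite ltnS => kn /(IHn kn) [a ->].
by exists (dup a); rewrite emb_dup.
Qed.

(* Pythagoras: [h - P h] is orthogonal to [P h - g]. *)
Lemma orth_proj_min n (Pn : H -> H) (h g : H) :
  is_orth_proj n Pn -> level n g -> nsq (h - Pn h) <= nsq (h - g).
Proof.
move=> Pn_proj [c ->]; have [[a Pa] orth] := Pn_proj h.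
have -> : h - emb M c = (h - Pn h) + emb M (a - c) by rewrite embB -Pa addrA subrK.
have orth' : re_ip (h - Pn h) (emb M (a - c)) = 0.
  by rewrite (formC re_ip_psd) // /re_ip orth.
rewrite !nsqE [X in _ <= X](quadD re_ip_psd) // orth' mulr0 addr0 lerDl.
by have := quad_ge0 re_ip_psd (x := emb M (a - c)) I.
Qed.

Lemma orth_proj_cvg (P : nat -> H -> H) (h : H) :
  (forall n, is_orth_proj n (P n)) -> nsq (h - P n h) @[n --> \oo] --> 0.
Proof.
move=> P_proj; apply/cvgr0Pnorm_lt => eps e0.
have [k [a ha]] := emb_dense h e0.
exists k => // n kn /=; rewrite ger0_norm; last by have := quad_ge0 re_ip_psd (x := h - P n h) I.
apply: le_lt_trans ha; apply: orth_proj_min (P_proj n) _.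
by apply: level_le kn _; exists a.
Qed.

End HyperfiniteL2.

Lemma dirichlet_form_psd (R : realType) (M : hyperfinite_L2 R)
    (D : L2 M -> Prop) (E : L2 M -> R) :
  dirichlet_form D E -> exists b, [/\ psd_form D b,
    forall x, D x -> E x = quad b x & form_closed D (quad b) (quad (@re_ip R M))].
Proof.
move=> [[D0 Dlin [B [Blin Bherm BE]]] E_ge0 _ E_closed _].
have EB x : D x -> E x = complex.Re (B x x) by move=> Dx; rewrite -BE.
have bF : psd_form D (fun x y => complex.Re (B x y)).
  by apply: Re_psd_form => // x Dx _; rewrite -EB //; apply: E_ge0.
exists (fun x y => complex.Re (B x y)); split=> // u Du u_cauchy.
have DuB m n : D (u m - u n) := domB bF (Du m) (Du n).
have [a [Da ua]] : exists a, D a /\ forall eps : R, 0 < eps -> exists N,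
    forall n, (N <= n)%N -> E (u n - a) + nsq (u n - a) < eps.
  apply: E_closed Du _ => eps e0; have [N uN] := u_cauchy eps e0.
  by exists N => m n Nm Nn; rewrite EB //; apply: uN.
exists a; split=> // eps e0; have [N uN] := ua eps e0.
by exists N => n Nn; have := uN n Nn; rewrite EB; last exact: (domB bF (Du n) Da).
Qed.

Theorem proposition2p3 (R : realType) (M : hyperfinite_L2 R)
    (D : L2 M -> Prop) (E : L2 M -> R) (P : nat -> L2 M -> L2 M) :
  dirichlet_form D E ->
  (forall n (a : 'M[R[i]]_(2 ^ n)), D (emb M a)) ->
  (forall n, is_orth_proj n (P n)) ->
  ((forall a, D a -> (fun n => E (P n a)) @ \oo --> E a) <->
   (forall a, D a -> (fun n => E (a - P n a)) @ \oo --> (0 : R))).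
Proof.
move=> /dirichlet_form_psd [b [bF Eb b_closed]] D_emb P_proj.
have DP a n : D (P n a) by have [[c ->] _] := P_proj n a; apply: D_emb.
have EbP a : D a -> (fun n => E (P n a)) = (fun n => quad b (P n a)).
  by move=> Da; apply/funext => n; apply: Eb.
have EbQ a : D a -> (fun n => E (a - P n a)) = (fun n => quad b (a - P n a)).
  by move=> Da; apply/funext => n; apply: Eb; exact: (domB bF Da (DP a n)).
split=> E_cvg a Da; rewrite ?EbP ?EbQ // ?Eb //.
- apply: (closed_form_quad_cvg bF (re_ip_psd M) (@re_ip_definite R M) b_closed Da (DP a)).
    exact: orth_proj_cvg.
  by rewrite -EbP // -Eb //; apply: E_cvg.
- apply: (quad_cvg bF Da (DP a)).
  by rewrite -EbQ //; apply: E_cvg.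
Qed.
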